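(* Let $G=(V,E)$ be a finite simple strongly connected directed graph with a fixed total order on $V$, and let $\mathbf b$ be a spanning tree of $G$. Let $Z=\phi(\mathbf b)$. Then the set of vertices erased when running the exploration algorithm on $\mathbf b$ coincides with the set of boundary points of $\mathbf b$, i.e. the set of vertices $u\in V\setminus Z$ having an outgoing edge with target in $Z$.
   Context: A spanning tree of $G$ is a subgraph on all vertices with no cycle, one vertex (root) of outdegree $0$ and all others of outdegree $1$. Exploration algorithm (depends on the fixed total order of $V$). Input: a spanning tree $\mathbf a$ rooted at $v$. Initialize $A=\{v\}$, $F=\{e: s(e)\neq v\}$, $\mathbf L$ = FIFO list of edges with target $v$, by increasing source. While $\mathbf L$ is nonempty, take its first edge $e$, with source $w$: if $e\in\mathbf a$, add $w$ to $A$, delete from $\mathbf L$ (and $F$) all edges with source $w$, and append to $\mathbf L$ all edges of $F$ with target $w$ by increasing source; otherwise delete from $\mathbf L$ and $F$ all edges with source or target $w$, and $w$ is said to be erased. At the end $\phi(\mathbf a)=A$. *)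

From mathcomp Require Import all_boot all_order.
Set Implicit Arguments. Unset Strict Implicit. Unset Printing Implicit Defensive.
Import Order.TTheory.
Local Open Scope order_scope.

Section Exploration.
Variables (d : Order.disp_t) (V : finOrderType d).

(* A directed graph on V is a relation G : rel V; the edge e = (s,t) has
   source e.1 and target e.2.  Simple = no loops (and at most one edge per
   ordered pair, automatic for a relation). *)
Definition simple_digraph (G : rel V) : Prop := irreflexive G.

Definition strongly_connected (G : rel V) : Prop := forall x y, connect G x y.

Definition outdeg (a : rel V) (x : V) : nat := #|[pred y | a x y]|.

Definition spanning_tree (G a : rel V) (v : V) : Prop :=
  [/\ subrel a G,
      outdeg a v = 0%N,
      (forall x, x != v -> outdeg a x = 1%N) &
      (forall x y, a x y -> ~~ connect a y x)].

Definition edges (G : rel V) : seq (V * V) :=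
  [seq e <- enum {: V * V} | G e.1 e.2].

Definition by_source (s : seq (V * V)) : seq (V * V) :=
  sort (fun e f : V * V => e.1 <= f.1) s.

(* One run of the exploration algorithm; returns (A, erased vertices).
   fuel bounds the number of iterations of the while loop. *)
Fixpoint explore_aux (a : rel V) (fuel : nat) (A : seq V) (F L : seq (V * V))
    (Er : seq V) : seq V * seq V :=
  match fuel with
  | 0 => (A, Er)
  | k.+1 =>
    match L with
    | [::] => (A, Er)
    | e :: L' =>
      let w := e.1 in
      if a w e.2 then
        let F' := [seq f <- F | f.1 != w] in
        let L'' := [seq f <- L' | f.1 != w] ++
                   by_source [seq f <- F' | f.2 == w] in
        explore_aux a k (w :: A) F' L'' Er
      else
        let F' := [seq f <- F | (f.1 != w) && (f.2 != w)] in
        let L'' := [seq f <- L' | (f.1 != w) && (f.2 != w)] in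
        explore_aux a k A F' L'' (w :: Er)
    end
  end.

(* Each iteration removes the head of L, and an edge is appended to L only
   when its target is added to A (which happens at most once per vertex),
   so the loop runs at most |E| <= |V|^2 times: the fuel below is enough. *)
Definition explore (G a : rel V) (v : V) : seq V * seq V :=
  explore_aux a (#|V| * #|V|)%N.+1 [:: v]
    [seq e <- edges G | e.1 != v]
    (by_source [seq e <- edges G | e.2 == v]) [::].

Definition phi (G a : rel V) (v : V) : {set V} :=
  [set x | x \in (explore G a v).1].

Definition erased (G a : rel V) (v : V) : {set V} :=
  [set x | x \in (explore G a v).2].

Definition boundary (G : rel V) (Z : {set V}) : {set V} :=
  [set u | (u \notin Z) && [exists z in Z, G u z]].

End Exploration.

From mathcomp Require Import all_boot all_order.
Set Implicit Arguments. Unset Strict Implicit. Unset Printing Implicit Defensive.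

(* Every iteration of the loop preserves an invariant: erased vertices lie
   outside A and have an edge into A; the queue L holds exactly the edges
   from unvisited, non-erased vertices into A; F holds every edge between
   unvisited, non-erased vertices.  When L is empty, a vertex outside A with
   an edge into A is therefore erased, so the erased set is the boundary of
   the final A.  The quantity |L| + #{f in F | target of f unvisited and not
   erased} strictly decreases at each iteration and is initially at most
   |V|^2, so the fuel of [explore] never runs out.  Neither the tree
   structure of b nor strong connectivity plays any role; only the absence
   of loops in G is used, to see that the initial queue has no visited
   source. *)

Lemma leq_count_add (T : Type) (a1 a2 a : pred T) (s : seq T) :
  (forall x, a1 x + a2 x <= a x) -> count a1 s + count a2 s <= count a s.
Proof.
move=> le_a; elim: s => //= x s IHs.
by rewrite addnACA; apply: leq_add (le_a x) IHs.
Qed.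

Section Exploration.
Variables (d : Order.disp_t) (V : finOrderType d) (G : rel V).

Lemma mem_edges (e : V * V) : (e \in edges G) = G e.1 e.2.
Proof. by rewrite mem_filter mem_enum andbT. Qed.

Lemma mem_by_source (s : seq (V * V)) : by_source s =i s.
Proof. by move=> e; rewrite mem_sort. Qed.

Record explore_inv (A Er : seq V) (F L : seq (V * V)) : Prop := ExploreInv {
  erased_inv : forall x, x \in Er -> x \notin A /\ exists2 z, z \in A & G x z;
  queue_inv : forall e, e \in L ->
    [/\ G e.1 e.2, e.2 \in A, e.1 \notin A & e.1 \notin Er];
  pending_inv : forall e, e \in F -> [/\ G e.1 e.2, e.1 \notin A & e.1 \notin Er];
  queue_complete : forall u z, G u z -> z \in A -> u \notin A -> u \notin Er ->
    (u, z) \in L;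
  pending_complete : forall u z, G u z -> u \notin A -> u \notin Er ->
    z \notin A -> z \notin Er -> (u, z) \in F }.

Definition explore_measure (A Er : seq V) (F L : seq (V * V)) : nat :=
  size L + count (fun f : V * V => (f.2 \notin A) && (f.2 \notin Er)) F.

Section Step.
Variables (A Er : seq V) (F L : seq (V * V)) (e : V * V).
Hypothesis inv : explore_inv A Er F (e :: L).

Let F_visit := [seq f <- F | f.1 != e.1].
Let L_visit := [seq f <- L | f.1 != e.1] ++ by_source [seq f <- F_visit | f.2 == e.1].
Let F_erase := [seq f <- F | (f.1 != e.1) && (f.2 != e.1)].
Let L_erase := [seq f <- L | (f.1 != e.1) && (f.2 != e.1)].

Lemma explore_inv_visit : explore_inv (e.1 :: A) Er F_visit L_visit.
Proof.
case: inv => erE queueE pendE queueC pendC.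
have [_ _ wA wEr] := queueE e (mem_head _ _).
split.
- move=> x xEr; have [xA [z zA Gxz]] := erE x xEr.
  split; last by exists z; rewrite // inE zA orbT.
  by rewrite inE negb_or xA andbT; apply: contraNneq wEr => <-.
- move=> f; rewrite mem_cat mem_filter mem_by_source !mem_filter.
  case/orP => [/andP[fw fL] | /andP[/eqP f2w /andP[fw fF]]].
    have [Gf f2A f1A f1Er] := queueE f (mem_behead (s := e :: L) fL).
    by split; rewrite // !inE ?negb_or ?fw ?f1A ?f2A ?orbT.
  have [Gf f1A f1Er] := pendE f fF.
  by split; rewrite // !inE ?negb_or ?f2w ?fw ?f1A ?eqxx.
- move=> f; rewrite mem_filter => /andP[fw /pendE[Gf f1A f1Er]].
  by split; rewrite // inE negb_or fw.
- move=> u z Guz; rewrite !inE negb_or => zA /andP[uw uA] uEr.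
  rewrite mem_cat mem_filter mem_by_source !mem_filter /= uw.
  case/orP: zA => [/eqP zw | zA]; first by rewrite zw eqxx pendC ?orbT // -zw.
  have := queueC u z Guz zA uA uEr; rewrite inE => /orP[/eqP ue | -> //].
  by rewrite -ue eqxx in uw.
- move=> u z Guz; rewrite !inE !negb_or => /andP[uw uA] uEr /andP[_ zA] zEr.
  by rewrite mem_filter uw pendC.
Qed.

Lemma explore_inv_erase : explore_inv A (e.1 :: Er) F_erase L_erase.
Proof.
case: inv => erE queueE pendE queueC pendC.
have [Gw wt wA _] := queueE e (mem_head _ _).
split.
- by move=> x; rewrite inE => /orP[/eqP -> | /erE //]; split=> //; exists e.2.
- move=> f; rewrite mem_filter => /andP[/andP[f1w _] fL].
  have [Gf f2A f1A f1Er] := queueE f (mem_behead (s := e :: L) fL).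
  by split; rewrite // inE negb_or f1w.
- move=> f; rewrite mem_filter => /andP[/andP[f1w _] /pendE[Gf f1A f1Er]].
  by split; rewrite // inE negb_or f1w.
- move=> u z Guz zA uA; rewrite inE negb_or => /andP[uw uEr].
  have := queueC u z Guz zA uA uEr; rewrite inE => /orP[/eqP ue | uzL].
    by rewrite -ue eqxx in uw.
  have zw : z != e.1 by apply: contraNneq wA => <-.
  by rewrite mem_filter uw zw.
- move=> u z Guz uA; rewrite !inE !negb_or => /andP[uw uEr] zA /andP[zw zEr].
  by rewrite mem_filter uw zw pendC.
Qed.

Lemma explore_measure_visit :
  explore_measure (e.1 :: A) Er F_visit L_visit < explore_measure A Er F (e :: L).
Proof.
have [_ _ wA wEr] := queue_inv inv (mem_head _ _).
rewrite /explore_measure size_cat size_sort !size_filter /= -addnA addSn ltnS.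
apply: leq_add; first exact: count_size.
rewrite !count_filter; apply: leq_count_add => f /=.
have [-> | f2w] := eqVneq f.2 e.1.
  by rewrite inE eqxx wA wEr; case: (f.1 != e.1).
rewrite inE (negbTE f2w).
by case: (f.2 \in A); case: (f.2 \in Er); case: (f.1 != e.1).
Qed.

Lemma explore_measure_erase :
  explore_measure A (e.1 :: Er) F_erase L_erase < explore_measure A Er F (e :: L).
Proof.
rewrite /explore_measure size_filter /= addSn ltnS.
apply: leq_add; first exact: count_size.
rewrite count_filter; apply: sub_count => f /=; rewrite inE negb_or.
by case/andP=> [/andP[-> /andP[_ ->]] _].
Qed.

End Step.

Variable b : rel V.

Definition erases_boundary (res : seq V * seq V) : Prop :=
  forall x, x \in res.2 <-> x \notin res.1 /\ exists2 z, z \in res.1 & G x z.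

Lemma explore_inv_done A Er F : explore_inv A Er F [::] -> erases_boundary (A, Er).
Proof.
case=> erE _ _ queueC _ x; split; first exact: erE.
case=> xA [z zA Gxz]; apply: contraT => xEr.
by have := queueC x z Gxz zA xA xEr.
Qed.

Lemma explore_aux_erases_boundary n A Er F L :
  explore_inv A Er F L -> explore_measure A Er F L < n ->
  erases_boundary (explore_aux b n A F L Er).
Proof.
elim: n A Er F L => [|n IHn] A Er F L inv // lt_n.
case: L inv lt_n => [|e L] inv lt_n /=; first exact: explore_inv_done inv.
rewrite ltnS in lt_n; case: ifP => _; apply: IHn.
- exact: explore_inv_visit.
- exact: leq_trans (explore_measure_visit inv) lt_n.
- exact: explore_inv_erase.
- exact: leq_trans (explore_measure_erase _ _ _ _ _) lt_n.
Qed.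

Section Start.
Variable v : V.

Let F0 := [seq e <- edges G | e.1 != v].
Let L0 := by_source [seq e <- edges G | e.2 == v].

Lemma explore_inv_start : irreflexive G -> explore_inv [:: v] [::] F0 L0.
Proof.
move=> G_irr; split=> //.
- move=> e; rewrite mem_by_source mem_filter mem_edges => /andP[/eqP e2v Ge].
  split; rewrite // ?e2v ?mem_head // inE.
  by apply: contraTneq Ge => e1v; rewrite e1v e2v G_irr.
- by move=> e; rewrite mem_filter mem_edges inE => /andP[-> ->].
- by move=> u z Guz; rewrite inE => /eqP zv _ _; rewrite mem_by_source mem_filter mem_edges zv eqxx -zv.
- by move=> u z Guz; rewrite inE => uv _ _ _; rewrite mem_filter mem_edges uv.
Qed.

Lemma explore_measure_start : explore_measure [:: v] [::] F0 L0 < (#|V| * #|V|).+1.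
Proof.
rewrite ltnS /explore_measure size_sort (size_filter _ (edges G)) (count_filter _ _ (edges G)).
apply: leq_trans (@leq_count_add _ _ _ predT _ _) _.
  by move=> f /=; rewrite inE; case: (f.2 == v); case: (f.1 != v).
by rewrite count_predT size_filter (leq_trans (count_size _ _)) // -cardE card_prod.
Qed.

End Start.

End Exploration.

Theorem lemma4p3 (d : Order.disp_t) (V : finOrderType d) (G : rel V)
    (Gsimple : simple_digraph G) (Gsc : strongly_connected G)
    (b : rel V) (v : V) (Hb : spanning_tree G b v) :
  erased G b v = boundary G (phi G b v).
Proof.
apply/setP => x; rewrite /erased /phi /boundary /explore inE.
have := explore_aux_erases_boundary b (explore_inv_start v Gsimple)
  (explore_measure_start G v).
case: explore_aux => A Er /(_ x) /= erE; rewrite !inE.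
apply/idP/andP => [/erE[xA [z zA Gxz]] | [xA /existsP[z /andP[zA Gxz]]]].
  by split=> //; apply/existsP; exists z; rewrite inE zA.
by apply/erE; split=> //; exists z; rewrite // inE in zA.
Qed.
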